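(* In the setting below, suppose $\|\boldsymbol\Theta^*\|_{2\to\infty}\le C_1$, $\|\mathbf A^*\|_{2\to\infty}\le C_2$, $\|\mathbf A\|_{2\to\infty}\le C_2$, $\sigma_r(\mathcal I_{1,i}(\mathbf A))>0$, and $$\|\mathbf Z_{i\cdot}\mathrm{diag}(\boldsymbol\Omega_{i\cdot})\mathbf A\|+\|\mathbf B_{1,i}(\mathbf A)\|+\beta_{1,i}(\mathbf A)\kappa_3(3C_1C_2)\le\min\Big\{\frac{\sigma_r^2(\mathcal I_{1,i}(\mathbf A))}{4\gamma_{1,i}(\mathbf A)\kappa_3(3C_1C_2)},\ \tfrac12\sigma_r(\mathcal I_{1,i}(\mathbf A))C_1\Big\}$$ (the first term of the minimum read as $+\infty$ if its denominator is $0$). Then there exists $\tilde{\boldsymbol\theta}_i$ with $S_{1,i}(\tilde{\boldsymbol\theta}_i;\mathbf A)=\mathbf 0$ and $$\|\tilde{\boldsymbol\theta}_i-\boldsymbol\theta_i^*\|\le2\sigma_r^{-1}(\mathcal I_{1,i}(\mathbf A))\big\{\|\mathbf Z_{i\cdot}\mathrm{diag}(\boldsymbol\Omega_{i\cdot})\mathbf A\|+\|\mathbf B_{1,i}(\mathbf A)\|+\beta_{1,i}(\mathbf A)\kappa_3(3C_1C_2)\big\},$$ and moreover $\|\tilde{\boldsymbol\theta}_i-\boldsymbol\theta_i^*\|\le C_1$.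
   Context: Deterministic setting: $\phi>0$; $b:\mathbb R\to\mathbb R$ is three times continuously differentiable with $b''>0$; $\boldsymbol\Theta^*\in\mathbb R^{n\times r}$ (rows $\boldsymbol\theta_i^{*T}$), $\mathbf A^*\in\mathbb R^{p\times r}$ (rows $\mathbf a_j^{*T}$), $\mathbf M^*=(m^*_{ij})=\boldsymbol\Theta^*(\mathbf A^* )^T$; $\mathbf A\in\mathbb R^{p\times r}$ with rows $\mathbf a_j^T$; $C_1,C_2>0$; $i\in[n]$ fixed; $y_{ij}\in\mathbb R$ and $\omega_{ij}\in\{0,1\}$ are fixed numbers; $z_{ij}=y_{ij}-b'(m^*_{ij})$, $\mathbf Z_{i\cdot}=(z_{i1},\dots,z_{ip})$, $\mathrm{diag}(\boldsymbol\Omega_{i\cdot})=\mathrm{diag}(\omega_{i1},\dots,\omega_{ip})$. $\kappa_3(\alpha)=\sup_{|x|\le\alpha}|b'''(x)|$. Definitions: $S_{1,i}(\boldsymbol\theta;\mathbf A)=\phi^{-1}\sum_{j=1}^p\omega_{ij}\{y_{ij}-b'(\mathbf a_j^T\boldsymbol\theta)\}\mathbf a_j$; $\mathbf B_{1,i}(\mathbf A)=\sum_{j=1}^p\omega_{ij}b''(m^*_{ij})\mathbf a_j(\mathbf a_j-\mathbf a_j^* )^T\boldsymbol\theta_i^*$; $\mathcal I_{1,i}(\mathbf A)=\sum_{j=1}^p\omega_{ij}b''(m^*_{ij})\mathbf a_j\mathbf a_j^T$; $\beta_{1,i}(\mathbf A)=\sup_{\|\mathbf u\|=1}\sum_j\omega_{ij}((\mathbf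 a_j-\mathbf a_j^* )^T\boldsymbol\theta_i^* )^2|\mathbf a_j^T\mathbf u|$; $\gamma_{1,i}(\mathbf A)=\sup_{\|\mathbf u\|=1}\sum_j\omega_{ij}|\mathbf a_j^T\mathbf u|^3$. $\sigma_r(\cdot)$ is the $r$-th largest singular value; $\|X\|_{2\to\infty}$ the maximal row Euclidean norm. *)

From mathcomp Require Import all_boot all_order all_algebra.
From mathcomp Require Import all_classical all_reals all_analysis.
Set Implicit Arguments. Unset Strict Implicit. Unset Printing Implicit Defensive.
Import Order.TTheory GRing.Theory Num.Theory.
Import numFieldNormedType.Exports.
Local Open Scope classical_set_scope.
Local Open Scope ring_scope.

Section Defs.
Variable R : realType.

Definition vnorm (r : nat) (v : 'rV[R]_r) : R := Num.sqrt (\sum_(k < r) v 0 k ^+ 2).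

Definition dotv (r : nat) (a u : 'rV[R]_r) : R := (a *m u^T) 0 0.

Definition norm2inf (m r : nat) (X : 'M[R]_(m, r)) : R :=
  \big[Num.max/0]_(j < m) vnorm (row j X).

(* sigma_r(M) for an r x r matrix: the r-th largest (= smallest) singular value,
   via the variational characterization min_{||u||=1} ||u M|| *)
Definition sigma_r (r : nat) (M : 'M[R]_r) : R :=
  inf [set y | exists u : 'rV[R]_r, vnorm u = 1 /\ y = vnorm (u *m M)].

Definition kappa3 (b3 : R -> R) (alpha : R) : R :=
  sup [set y | exists x : R, `|x| <= alpha /\ y = `|b3 x|].

Definition Mstar (n p r : nat) (Thetas : 'M[R]_(n, r)) (As : 'M[R]_(p, r)) : 'M[R]_(n, p) :=
  Thetas *m As^T.

Definition Zmat (n p r : nat) (b1 : R -> R) (y : 'M[R]_(n, p))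
  (Thetas : 'M[R]_(n, r)) (As : 'M[R]_(p, r)) : 'M[R]_(n, p) :=
  \matrix_(i, j) (y i j - b1 (Mstar Thetas As i j)).

Definition Omat (n p : nat) (om : 'I_n -> 'I_p -> bool) : 'M[R]_(n, p) :=
  \matrix_(i, j) (om i j)%:R.

Definition ZOA (n p r : nat) (b1 : R -> R) (y : 'M[R]_(n, p)) (om : 'I_n -> 'I_p -> bool)
  (Thetas : 'M[R]_(n, r)) (As A : 'M[R]_(p, r)) (i : 'I_n) : 'rV[R]_r :=
  row i (Zmat b1 y Thetas As) *m diag_mx (row i (Omat om)) *m A.

Definition S1 (n p r : nat) (phi : R) (b1 : R -> R) (y : 'M[R]_(n, p))
  (om : 'I_n -> 'I_p -> bool) (i : 'I_n) (theta : 'rV[R]_r) (A : 'M[R]_(p, r)) : 'rV[R]_r :=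
  phi^-1 *: \sum_(j < p) ((om i j)%:R * (y i j - b1 (dotv (row j A) theta))) *: row j A.

Definition B1 (n p r : nat) (b2 : R -> R) (om : 'I_n -> 'I_p -> bool)
  (Thetas : 'M[R]_(n, r)) (As A : 'M[R]_(p, r)) (i : 'I_n) : 'rV[R]_r :=
  \sum_(j < p) ((om i j)%:R * b2 (Mstar Thetas As i j)
                 * dotv (row j A - row j As) (row i Thetas)) *: row j A.

Definition I1 (n p r : nat) (b2 : R -> R) (om : 'I_n -> 'I_p -> bool)
  (Thetas : 'M[R]_(n, r)) (As A : 'M[R]_(p, r)) (i : 'I_n) : 'M[R]_r :=
  \sum_(j < p) ((om i j)%:R * b2 (Mstar Thetas As i j)) *: ((row j A)^T *m row j A).

Definition beta1 (n p r : nat) (om : 'I_n -> 'I_p -> bool)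
  (Thetas : 'M[R]_(n, r)) (As A : 'M[R]_(p, r)) (i : 'I_n) : R :=
  sup [set y | exists u : 'rV[R]_r, vnorm u = 1 /\
        y = \sum_(j < p) (om i j)%:R * (dotv (row j A - row j As) (row i Thetas)) ^+ 2
                          * `|dotv (row j A) u|].

Definition gamma1 (n p r : nat) (om : 'I_n -> 'I_p -> bool)
  (A : 'M[R]_(p, r)) (i : 'I_n) : R :=
  sup [set y | exists u : 'rV[R]_r, vnorm u = 1 /\
        y = \sum_(j < p) (om i j)%:R * `|dotv (row j A) u| ^+ 3].

End Defs.

From mathcomp Require Import all_boot all_order all_algebra.
From mathcomp Require Import all_classical all_reals all_analysis.
From mathcomp Require Import ring lra.
Import Order.TTheory GRing.Theory Num.Theory.
Import numFieldNormedType.Exports.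
Local Open Scope classical_set_scope.
Local Open Scope ring_scope.

(* Up to the factor phi^-1 the score S_{1,i}(. ; A) is the gradient of the log-likelihood
   l(theta) = sum_j w_ij (y_ij a_j^T theta - b(a_j^T theta)).  Expanding b' to second order
   around m*_ij gives, for |d| = rho <= C1,
     <S(theta*_i + d), d> <= rho (L - sigma_r rho + kappa3 gamma rho^2),
   where L is the left-hand side of the hypothesis and sigma_r |d|^2 <= d^T I_{1,i} d comes from
   an eigenvector minimising the quadratic form on the unit sphere.  For rho = 2 L / sigma_r the
   hypothesis makes the right-hand side non-positive, so a maximiser of l over the closed ball
   of radius rho, which exists by compactness, cannot have an outward score on the boundary;
   the first-order conditions then force its score to vanish. *)

Section Euclidean.
Context {R : realType} {r : nat}.
Implicit Types (a u v d : 'rV[R]_r) (c t : R).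

Lemma dotvE a u : dotv a u = \sum_(k < r) a 0 k * u 0 k.
Proof. by rewrite /dotv mxE; apply: eq_bigr => k _; rewrite mxE. Qed.

Lemma dotvC a u : dotv a u = dotv u a.
Proof. by rewrite !dotvE; apply: eq_bigr => k _; rewrite mulrC. Qed.

Lemma dotvDr a u v : dotv a (u + v) = dotv a u + dotv a v.
Proof. by rewrite !dotvE -big_split; apply: eq_bigr => k _; rewrite mxE mulrDr. Qed.

Lemma dotvZr a c u : dotv a (c *: u) = c * dotv a u.
Proof. by rewrite !dotvE mulr_sumr; apply: eq_bigr => k _; rewrite mxE mulrCA. Qed.

Lemma dotvNr a u : dotv a (- u) = - dotv a u.
Proof. by rewrite -scaleN1r dotvZr mulN1r. Qed.

Lemma dotvBr a u v : dotv a (u - v) = dotv a u - dotv a v.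
Proof. by rewrite dotvDr dotvNr. Qed.

Lemma dotv0r a : dotv a 0 = 0.
Proof. by rewrite -(scale0r 0) dotvZr mul0r. Qed.

Lemma dotvDl a u v : dotv (u + v) a = dotv u a + dotv v a.
Proof. by rewrite dotvC dotvDr !(dotvC a). Qed.

Lemma dotvZl a c u : dotv (c *: u) a = c * dotv u a.
Proof. by rewrite dotvC dotvZr dotvC. Qed.

Lemma dotvNl a u : dotv (- u) a = - dotv u a.
Proof. by rewrite dotvC dotvNr dotvC. Qed.

Lemma dotvBl a u v : dotv (u - v) a = dotv u a - dotv v a.
Proof. by rewrite dotvDl dotvNl. Qed.

Lemma dotv_suml (p : nat) (f : 'I_p -> R) (g : 'I_p -> 'rV[R]_r) v :
  dotv (\sum_(j < p) f j *: g j) v = \sum_(j < p) f j * dotv (g j) v.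
Proof.
elim/big_ind2: _ => [|x1 x2 y1 y2 <- <-|j _]; last exact: dotvZl.
  by rewrite dotvC dotv0r.
by rewrite dotvDl.
Qed.

Lemma sqr_coord_le_dotvv u k : u 0 k ^+ 2 <= dotv u u.
Proof.
rewrite dotvE (bigD1 k) //= expr2 lerDl.
by apply: sumr_ge0 => l _; rewrite -expr2 sqr_ge0.
Qed.

Lemma dotvv_ge0 u : 0 <= dotv u u.
Proof. by rewrite dotvE; apply: sumr_ge0 => k _; rewrite -expr2 sqr_ge0. Qed.

Lemma dotvv_le0 u : dotv u u <= 0 -> u = 0.
Proof.
move=> u0; apply/rowP => k; rewrite mxE; apply/eqP; rewrite -sqrf_eq0 eq_le sqr_ge0.
by rewrite (le_trans (sqr_coord_le_dotvv u k) u0).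
Qed.

Lemma dotvvDZ d t v :
  dotv (d + t *: v) (d + t *: v) = dotv d d + 2 * t * dotv d v + t ^+ 2 * dotv v v.
Proof. by rewrite !dotvDl !dotvDr !dotvZl !dotvZr (dotvC v d); ring. Qed.

Lemma vnormE u : vnorm u = Num.sqrt (dotv u u).
Proof. by rewrite /vnorm dotvE; congr Num.sqrt; apply: eq_bigr => k _; rewrite expr2. Qed.

Lemma vnorm_ge0 u : 0 <= vnorm u.
Proof. by rewrite vnormE sqrtr_ge0. Qed.

Lemma sqr_vnorm u : vnorm u ^+ 2 = dotv u u.
Proof. by rewrite vnormE sqr_sqrtr // dotvv_ge0. Qed.

Lemma vnorm0 : vnorm (0 : 'rV[R]_r) = 0.
Proof. by rewrite vnormE dotv0r sqrtr0. Qed.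

Lemma vnorm_eq0 u : vnorm u = 0 -> u = 0.
Proof. by move=> u0; apply: dotvv_le0; rewrite -sqr_vnorm u0 expr0n. Qed.

Lemma vnormZ c u : vnorm (c *: u) = `|c| * vnorm u.
Proof.
by rewrite !vnormE dotvZl dotvZr mulrA -expr2 sqrtrM ?sqr_ge0 // sqrtr_sqr.
Qed.

Lemma vnorm_gt0 u : u != 0 -> 0 < vnorm u.
Proof.
by move=> u_neq0; rewrite lt_def vnorm_ge0 andbT; apply: contra_neq u_neq0; exact: vnorm_eq0.
Qed.

Lemma vnorm_normalize u : u != 0 -> vnorm ((vnorm u)^-1 *: u) = 1.
Proof.
move=> /vnorm_gt0 nu0.
by rewrite vnormZ ger0_norm ?invr_ge0 ?vnorm_ge0 // mulVf ?gt_eqF.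
Qed.

Lemma vnorm_eq1 u : (vnorm u = 1) <-> (dotv u u = 1).
Proof.
rewrite vnormE; split => [u1|->]; last exact: sqrtr1.
by rewrite -[dotv u u]sqr_sqrtr ?dotvv_ge0 // u1 expr1n.
Qed.

Lemma vnorm_le c u : 0 <= c -> dotv u u <= c ^+ 2 -> vnorm u <= c.
Proof. by move=> c0; rewrite -sqr_vnorm ler_pXn2r // nnegrE vnorm_ge0. Qed.

Lemma normr_dotv_le a u : `|dotv a u| <= vnorm a * vnorm u.
Proof.
have [u0|u_neq0] := eqVneq u 0.
  by rewrite u0 dotv0r normr0 mulr_ge0 // vnorm_ge0.
have uu0 : 0 < dotv u u by rewrite -sqr_vnorm exprn_gt0 ?vnorm_gt0.
(* |a + t u|^2 >= 0 at its minimiser t = - <a,u> / |u|^2 *)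
have := dotvv_ge0 (a + (- (dotv a u / dotv u u)) *: u).
rewrite dotvvDZ (_ : _ + _ = dotv a a - dotv a u ^+ 2 / dotv u u); last first.
  by field; rewrite gt_eqF.
rewrite subr_ge0 ler_pdivrMr // -!sqr_vnorm -exprMn -real_normK ?num_real //.
by rewrite ler_pXn2r // nnegrE ?mulr_ge0 ?vnorm_ge0.
Qed.

End Euclidean.

Section RealFunctions.
Context {R : realType}.
Implicit Types f df : R -> R.

Lemma is_derive_le0_at_right_max f D t1 :
  is_derive (0 : R) (1 : R) f D -> 0 < t1 -> (forall t, 0 < t <= t1 -> f t <= f 0) -> D <= 0.
Proof.
move=> [fd <-] t10 fmax.
rewrite ['D_1 f 0]cvg_at_rightE //; apply: limr_le.
  rewrite -(cvg_at_rightE (fun h : R => h^-1 *: ((f \o shift 0) _ - f 0))) //.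
  apply: cvg_trans fd; apply: cvg_app.
  move=> A [e e0 Ae]; exists e => // x xe x0; apply: Ae => //.
  exact/lt0r_neq0.
near=> h; apply: mulr_ge0_le0.
  by rewrite invr_ge0; apply: ltW; near: h; exists 1 => /=.
rewrite subr_le0 /= addr0 [_%:A]mulr1; apply: fmax; apply/andP; split.
  by near: h; exists 1 => /=.
near: h; exists t1 => //= h; rewrite /ball /= sub0r normrN => /ltr_normlW + _.
exact: ltW.
Unshelve. all: by end_near. Qed.

Lemma continuous_of_is_derive {f df} :
  (forall t, is_derive t (1 : R) f (df t)) -> continuous f.
Proof.
move=> fd t; apply: differentiable_continuous.
by apply/derivable1_diffP; have [] := fd t.
Qed.

Lemma MVT_convex {f df} m x : (forall t, is_derive t (1 : R) f (df t)) ->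
  exists2 th, 0 <= th <= 1 & f x - f m = df (m + th * (x - m)) * (x - m).
Proof.
move=> fd; have fc := continuous_subspaceT (continuous_of_is_derive fd).
have [mx|xm] := leP m x.
  have [c] := MVT_segment mx (fun t _ => fd t) (fc _); rewrite in_itv /= => /andP[mc cx] ->.
  have [->|x_neq_m] := eqVneq x m; first by exists 0; rewrite ?lexx ?ler01 ?subrr ?mulr0.
  have xm0 : 0 < x - m by rewrite subr_gt0 lt_def x_neq_m.
  exists ((c - m) / (x - m)); last by rewrite divfK ?gt_eqF // (addrC m) subrK.
  by rewrite divr_ge0 ?subr_ge0 //= ler_pdivrMr // mul1r lerB.
have [c] := MVT_segment (ltW xm) (fun t _ => fd t) (fc _); rewrite in_itv /= => /andP[xc cm] e.
have mx0 : 0 < m - x by rewrite subr_gt0.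
exists ((m - c) / (m - x)).
  by rewrite divr_ge0 ?subr_ge0 ?(ltW xm) //= ler_pdivrMr // mul1r lerB.
rewrite (_ : m + _ * (x - m) = c); last by field; rewrite gt_eqF.
by rewrite -opprB e -mulrN opprB.
Qed.

Lemma normr_convex_le (al m x th : R) : 0 <= th <= 1 ->
  `|m| <= al -> `|x| <= al -> `|m + th * (x - m)| <= al.
Proof.
move=> /andP[th0 th1]; rewrite !ler_norml => /andP[m1 m2] /andP[x1 x2].
by apply/andP; split; nra.
Qed.

Lemma continuous_bounded_on_ball f al : continuous f ->
  exists2 K, 0 <= K & forall t, `|t| <= al -> `|f t| <= K.
Proof.
move=> fc; have [al0|al0] := leP 0 al; last first.
  by exists 0 => // t; have := normr_ge0 t; lra.
have [c _ cmax] : exists2 c, c \in `[- al, al] & forall t, t \in `[- al, al] -> `|f t| <= `|f c|.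
  apply: EVT_max; first lra.
  by apply: continuous_subspaceT => t; apply: continuous_comp (fc t) _; exact: norm_continuous.
by exists `|f c| => // t ht; apply: cmax; rewrite in_itv /= -ler_norml.
Qed.

Lemma taylor_remainder_le {f f1 f2} (K al m x : R) :
  (forall t, is_derive t (1 : R) f (f1 t)) -> (forall t, is_derive t (1 : R) f1 (f2 t)) ->
  (forall t, `|t| <= al -> `|f2 t| <= K) -> `|m| <= al -> `|x| <= al ->
  `|f x - f m - f1 m * (x - m)| <= K / 2 * (x - m) ^+ 2.
Proof.
move=> fd f1d f2K mal xal.
suff side s : s ^+ 2 = 1 -> s * (f x - f m - f1 m * (x - m)) <= K / 2 * (x - m) ^+ 2.
  have := side 1 (expr1n _ _); have := side (-1); rewrite sqrrN expr1n => /(_ erefl).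
  by rewrite ler_norml; lra.
move=> s2.
(* the mean value theorem for g, then for f1, gives g x = (s f2 c' - K) th (x - m)^2 *)
pose g t := s * (f t - f m - f1 m * (t - m)) - K / 2 * (t - m) ^+ 2.
have gd t : is_derive t (1 : R) g (s * (f1 t - f1 m) - K * (t - m)).
  by apply: is_derive_eq; rewrite -![_ *: _]/(_ * _); field.
have [th th01 gx] := MVT_convex m x gd.
set c := m + th * (x - m) in gx.
have [th' th'01 f1c] := MVT_convex m c f1d.
set c' := m + th' * (c - m) in f1c.
have c'al : `|c'| <= al by apply: normr_convex_le => //; exact: normr_convex_le.
have sf2 : s * f2 c' <= K.
  apply: le_trans (ler_norm _) _; rewrite normrM (_ : `|s| = 1) ?mul1r ?f2K //.
  by apply/eqP; rewrite -(@eqrXn2 _ 2) ?normr_ge0 // real_normK ?num_real // s2 expr1n.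
have : g x <= 0.
  rewrite -[g x]subr0 -[X in _ - X](_ : g m = 0); last by rewrite /g; ring.
  rewrite gx f1c /c (_ : _ * (x - m) = (s * f2 c' - K) * th * (x - m) ^+ 2); last by ring.
  by rewrite -mulrA mulr_le0_ge0 ?subr_le0 // mulr_ge0 ?sqr_ge0 //; case/andP: th01.
rewrite /g; lra.
Qed.

Lemma quadratic_ge0_lin_eq0 (al be : R) :
  (forall t, 0 <= al * t + be * t ^+ 2) -> al = 0.
Proof.
move=> ge0; pose D := `|be| + 1.
have D0 : 0 < D by rewrite /D; have := normr_ge0 be; lra.
have := ge0 (- al / D); rewrite -(pmulr_rge0 _ (exprn_gt0 2 D0)).
rewrite (_ : D ^+ 2 * _ = - al ^+ 2 * D + be * al ^+ 2); last by field; rewrite gt_eqF.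
have := ler_norm be; have := sqr_ge0 al; rewrite /D => ? ? ?.
by apply/eqP; rewrite -sqrf_eq0 eq_le sqr_ge0 andbT; nra.
Qed.

Lemma small_quadratic_le (a b c : R) : 0 <= b -> 0 <= c -> 0 < c \/ a < 0 ->
  exists2 t1, 0 < t1 & forall t, 0 < t <= t1 -> a * t + b * t ^+ 2 <= c.
Proof.
move=> b0 c0 ca; have [a0|a0] := ltP a 0.
  exists (- a / (b + 1)) => [|t /andP[t0]]; first by rewrite divr_gt0 //; lra.
  by rewrite ler_pdivlMr; [nra | lra].
have c_gt0 : 0 < c by case: ca => //; lra.
exists (Num.min 1 (c / (a + b + 1))) => [|t /andP[t0]].
  by rewrite lt_min ltr01 divr_gt0 //; lra.
rewrite le_min ler_pdivlMr => [/andP[t1 tc]|]; last lra.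
have : b * t ^+ 2 <= b * t by rewrite ler_wpM2l // expr2 ler_piMl // ltW.
nra.
Qed.

Lemma radius_condition_le0 (sig L g k : R) : 0 < sig -> 0 <= L -> 0 <= g -> 0 <= k ->
  (g * k != 0 -> L <= sig ^+ 2 / (4 * g * k)) ->
  L - sig * (2 * sig^-1 * L) + k * g * (2 * sig^-1 * L) ^+ 2 <= 0.
Proof.
move=> sig_gt0 L_ge0 g_ge0 k_ge0 L_le.
rewrite (_ : _ + _ = L * (4 * g * k * L - sig ^+ 2) / sig ^+ 2); last by field; rewrite gt_eqF.
rewrite pmulr_lle0 ?invr_gt0 ?exprn_gt0 //; apply: mulr_ge0_le0 L_ge0 _; rewrite subr_le0.
have [gk0|gk_neq0] := eqVneq (g * k) 0; first by rewrite -(mulrA 4) gk0 mulr0 mul0r sqr_ge0.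
have gk_gt0 : 0 < 4 * g * k by rewrite -(mulrA 4) mulr_gt0 // lt_def gk_neq0 mulr_ge0.
by rewrite mulrC -ler_pdivlMr //; exact: L_le.
Qed.

End RealFunctions.

Section Compactness.
Context {R : realType} {r : nat}.

Lemma continuous_dotv (a : 'rV[R]_r) : continuous (dotv a).
Proof.
rewrite (_ : dotv a = fun x => \sum_(k < r) a 0 k * x 0 k); last first.
  by apply: funext => y; rewrite dotvE.
apply: continuous_big => [|k _ x]; first exact: add_continuous.
by apply: continuousM; [exact: cst_continuous | exact: coord_continuous].
Qed.

Lemma continuous_dotvv_sub (c : 'rV[R]_r) :
  continuous (fun x : 'rV[R]_r => dotv (x - c) (x - c)).
Proof.
rewrite (_ : (fun x => _) =
    fun x : 'rV[R]_r => \sum_(k < r) (x 0 k - c 0 k) * (x 0 k - c 0 k)); last first.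
  by apply: funext => x; rewrite dotvE; apply: eq_bigr => k _; rewrite !mxE.
apply: continuous_big => [|k _ x]; first exact: add_continuous.
have ck : {for x, continuous (fun y : 'rV[R]_r => y 0 k - c 0 k)}.
  by apply: continuousB; [exact: coord_continuous | exact: cst_continuous].
exact: (continuousM (s := fun y : 'rV[R]_r => y 0 k - c 0 k) ck ck).
Qed.

Lemma compact_dotv_ball (c : 'rV[R]_r) (rho : R) :
  compact [set x | dotv (x - c) (x - c) <= rho ^+ 2].
Proof.
apply: (@subclosed_compact _ _
  [set v : 'rV[R]_r | forall k, `[c 0 k - `|rho|, c 0 k + `|rho|]%classic (v ord0 k)]).
- have := proj1 (continuous_closedP _) (continuous_dotvv_sub c) _ (@closed_le R (rho ^+ 2)).
  exact.
- apply: (rV_compact (A := fun k => `[c 0 k - `|rho|, c 0 k + `|rho|]%classic)) => k.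
  exact: segment_compact.
move=> x /= xc k; rewrite /= in_itv /=.
have : `|(x - c) 0 k| <= `|rho|.
  rewrite -(@ler_pXn2r _ 2) // ?nnegrE ?normr_ge0 // !real_normK ?num_real //.
  exact: le_trans (sqr_coord_le_dotvv _ k) xc.
by rewrite !mxE ler_norml => /andP[? ?]; apply/andP; split; lra.
Qed.

Lemma compact_unit_sphere : compact [set x : 'rV[R]_r | dotv x x = 1].
Proof.
apply: (@subclosed_compact _ _ [set x | dotv (x - 0) (x - 0) <= 1 ^+ 2]).
- rewrite (_ : [set x | _] = (fun x => dotv (x - 0) (x - 0)) @^-1` [set x | x = 1]).
    apply: (proj1 (continuous_closedP _) (continuous_dotvv_sub 0)).
    exact: closed_eq.
  by apply: funext => x; rewrite /= subr0.
- exact: compact_dotv_ball.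
by move=> x /= x1; rewrite subr0 x1 expr1n.
Qed.

End Compactness.

Section Suprema.
Context {R : realType} {r : nat}.

Lemma sup_ge0 (E : set R) : has_ubound E -> (forall x, E x -> 0 <= x) -> 0 <= sup E.
Proof.
move=> Eub E0; have [[x Ex]|/set0P/negP/negbNE/eqP->] := pselect (E !=set0).
  exact: le_trans (E0 _ Ex) (ub_le_sup Eub Ex).
by rewrite sup0.
Qed.

Lemma le_sup_homogeneous (G : 'rV[R]_r -> R) (m : nat) :
  G 0 = 0 -> (forall k u, 0 < k -> G (k *: u) = k ^+ m.+1 * G u) ->
  has_ubound [set y | exists u, vnorm u = 1 /\ y = G u] ->
  forall u, G u <= sup [set y | exists u, vnorm u = 1 /\ y = G u] * vnorm u ^+ m.+1.
Proof.
move=> G0 GZ Gub u; have [->|u_neq0] := eqVneq u 0; first by rewrite G0 vnorm0 expr0n mulr0.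
have nu0 := vnorm_gt0 _ u_neq0.
have := ub_le_sup Gub (ex_intro _ _ (conj (vnorm_normalize _ u_neq0) erefl)).
by rewrite GZ ?invr_gt0 // exprVn ler_pdivrMl ?exprn_gt0 // mulrC.
Qed.

Lemma kappa3_bound (f : R -> R) (al t : R) :
  continuous f -> `|t| <= al -> `|f t| <= kappa3 f al.
Proof.
move=> fc tal; apply: ub_le_sup; last by exists t.
have [K _ fK] := continuous_bounded_on_ball _ al fc.
by exists K => _ [x [xal ->]]; exact: fK.
Qed.

End Suprema.

Section GramForm.
Context {R : realType} {r p : nat}.
Variables (c : 'I_p -> R) (a : 'I_p -> 'rV[R]_r).
Hypothesis c_ge0 : forall j, 0 <= c j.

Let M := \sum_(j < p) c j *: ((a j)^T *m a j).
Let Q d := \sum_(j < p) c j * dotv (a j) d ^+ 2.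

Lemma mul_rV_gram u : u *m M = \sum_(j < p) (c j * dotv (a j) u) *: a j.
Proof.
apply/rowP => k; rewrite !mxE summxE.
under eq_bigr => l _ do rewrite summxE mulr_sumr.
rewrite exchange_big /=; apply: eq_bigr => j _.
rewrite !mxE dotvE mulr_sumr mulr_suml; apply: eq_bigr => l _.
by rewrite !mxE big_ord1 !mxE; ring.
Qed.

Lemma gram_form_ge0 d : 0 <= Q d.
Proof. by apply: sumr_ge0 => j _; rewrite mulr_ge0 ?sqr_ge0. Qed.

Lemma continuous_gram_form : continuous Q.
Proof.
apply: continuous_big => [|j _ x]; first exact: add_continuous.
apply: (continuousM (s := fun=> c j) (t := fun d => dotv (a j) d ^+ 2)); first exact: cst_continuous.
have := continuous_comp (continuous_dotv (a j) x) (@exprn_continuous R 2 (dotv (a j) x)).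
exact.
Qed.

Section Minimizer.
Variable u0 : 'rV[R]_r.
Hypothesis u0_unit : dotv u0 u0 = 1.
Hypothesis u0_min : forall u, dotv u u = 1 -> Q u0 <= Q u.

Lemma gram_form_min_le d : Q u0 * dotv d d <= Q d.
Proof.
have [->|d_neq0] := eqVneq d 0; first by rewrite dotv0r mulr0 gram_form_ge0.
set s := vnorm d; have s0 : 0 < s := vnorm_gt0 _ d_neq0.
have := u0_min _ (proj1 (vnorm_eq1 _) (vnorm_normalize _ d_neq0)).
rewrite -/s (_ : Q (s^-1 *: d) = s^-1 ^+ 2 * Q d); last first.
  by rewrite /Q mulr_sumr; apply: eq_bigr => j _; rewrite dotvZr; ring.
by rewrite -sqr_vnorm -/s exprVn ler_pdivlMl ?exprn_gt0 // mulrC.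
Qed.

(* first-order condition for the minimum of Q on the sphere *)
Lemma gram_min_eigen : u0 *m M = Q u0 *: u0.
Proof.
have crit v : dotv (u0 *m M) v = Q u0 * dotv u0 v.
  rewrite mul_rV_gram dotv_suml; set B := \sum_(j < p) _.
  suff : 2 * (B - Q u0 * dotv u0 v) = 0 by lra.
  apply: (quadratic_ge0_lin_eq0 _ (Q v - Q u0 * dotv v v)) => t.
  have := gram_form_min_le (u0 + t *: v); rewrite dotvvDZ u0_unit -subr_ge0.
  rewrite (_ : Q (u0 + t *: v) = Q u0 + 2 * t * B + t ^+ 2 * Q v); last first.
    rewrite /Q /B mulr_sumr mulr_sumr -!big_split /=.
    by apply: eq_bigr => j _; rewrite dotvDr dotvZr; ring.
  lra.
by apply/eqP; rewrite -subr_eq0; apply/eqP/dotvv_le0; rewrite dotvBl dotvZl crit subrr.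
Qed.

End Minimizer.

Lemma sigma_r_gram_le d : sigma_r M * dotv d d <= Q d.
Proof.
have [->|d_neq0] := eqVneq d 0; first by rewrite dotv0r mulr0 gram_form_ge0.
have S0 : [set u : 'rV[R]_r | dotv u u = 1] !=set0.
  by exists ((vnorm d)^-1 *: d); apply/vnorm_eq1/vnorm_normalize.
have [u0 /[!inE] u0_unit u0_min] := EVT_min_rV S0 (@compact_unit_sphere R r)
  (continuous_subspaceT continuous_gram_form).
have u0_min' u : dotv u u = 1 -> Q u0 <= Q u by move=> u1; apply: u0_min; rewrite inE.
apply: le_trans (gram_form_min_le u0 u0_min' d); rewrite ler_wpM2r ?dotvv_ge0 //.
apply: ge_inf; first by exists 0 => _ [u [_ ->]]; exact: vnorm_ge0.
exists u0; split; first exact/vnorm_eq1.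
rewrite (gram_min_eigen u0 u0_unit u0_min') vnormZ ger0_norm ?gram_form_ge0 //.
by rewrite (proj2 (vnorm_eq1 _) u0_unit) mulr1.
Qed.

End GramForm.

Lemma kkt_ball_eq0 {R : realType} {r : nat} (d s : 'rV[R]_r) (rho : R) :
  0 < rho -> dotv d d <= rho ^+ 2 ->
  (forall v, dotv d d < rho ^+ 2 \/ dotv d v < 0 -> dotv s v <= 0) ->
  (dotv d d = rho ^+ 2 -> dotv s d <= 0) -> s = 0.
Proof.
move=> rho0 d_in inward boundary; apply: dotvv_le0.
have [d_int|d_bd] := ltP (dotv d d) (rho ^+ 2); first exact: inward (or_introl d_int).
have dd : dotv d d = rho ^+ 2 by apply/eqP; rewrite eq_le d_in.
have rho2 : 0 < rho ^+ 2 by exact: exprn_gt0.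
have := boundary dd; have := inward (- d); rewrite !dotvNr dd oppr_lt0 oppr_le0 => /(_ (or_intror rho2)).
have := inward (s - d); rewrite !dotvBr dd (dotvC d s) => sd_le ? ?.
have : dotv s d - rho ^+ 2 < 0 by lra.
by move/(@or_intror (rho ^+ 2 < rho ^+ 2))/sd_le; lra.
Qed.

Section BetaGamma.
Context {R : realType} {n p r : nat}.
Variables (om : 'I_n -> 'I_p -> bool) (Thetas : 'M[R]_(n, r)) (As A : 'M[R]_(p, r)) (i : 'I_n).

Let w j : R := (om i j)%:R.
Let e j := dotv (row j A - row j As) (row i Thetas).

Lemma beta1_bound :
  0 <= beta1 om Thetas As A i /\
  forall u, \sum_(j < p) w j * e j ^+ 2 * `|dotv (row j A) u| <= beta1 om Thetas As A i * vnorm u.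
Proof.
pose G u := \sum_(j < p) w j * e j ^+ 2 * `|dotv (row j A) u|.
have Gub : has_ubound [set y | exists u, vnorm u = 1 /\ y = G u].
  exists (\sum_(j < p) w j * e j ^+ 2 * vnorm (row j A)) => _ [u [u1 ->]].
  apply: ler_sum => j _; apply: ler_wpM2l; first by rewrite mulr_ge0 ?ler0n ?sqr_ge0.
  by have := normr_dotv_le (row j A) u; rewrite u1 mulr1.
split.
  apply: (sup_ge0 _ Gub) => _ [u [_ ->]]; apply: sumr_ge0 => j _.
  exact: mulr_ge0 (mulr_ge0 (ler0n _ _) (sqr_ge0 _)) (normr_ge0 _).
move=> u; rewrite -[vnorm u]expr1; apply: (le_sup_homogeneous G 0) Gub u.
  by apply: big1 => j _; rewrite dotv0r normr0 mulr0.
by move=> k v k0; rewrite mulr_sumr; apply: eq_bigr => j _; rewrite dotvZr normrM gtr0_norm // mulrCA.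
Qed.

Lemma gamma1_bound :
  0 <= gamma1 om A i /\
  forall u, \sum_(j < p) w j * `|dotv (row j A) u| ^+ 3 <= gamma1 om A i * vnorm u ^+ 3.
Proof.
pose G u := \sum_(j < p) w j * `|dotv (row j A) u| ^+ 3.
have Gub : has_ubound [set y | exists u, vnorm u = 1 /\ y = G u].
  exists (\sum_(j < p) w j * vnorm (row j A) ^+ 3) => _ [u [u1 ->]].
  apply: ler_sum => j _; apply: ler_wpM2l; first exact: ler0n.
  rewrite lerXn2r ?nnegrE ?vnorm_ge0 //.
  by have := normr_dotv_le (row j A) u; rewrite u1 mulr1.
split.
  apply: (sup_ge0 _ Gub) => _ [u [_ ->]]; apply: sumr_ge0 => j _.
  exact: mulr_ge0 (ler0n _ _) (exprn_ge0 _ (normr_ge0 _)).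
apply: (le_sup_homogeneous G 2) Gub; first by apply: big1 => j _; rewrite dotv0r normr0 expr0n mulr0.
by move=> k v k0; rewrite mulr_sumr; apply: eq_bigr => j _; rewrite dotvZr normrM gtr0_norm // exprMn mulrCA.
Qed.

End BetaGamma.

Lemma vnorm_row_le {R : realType} {m r : nat} (X : 'M[R]_(m, r)) j :
  vnorm (row j X) <= norm2inf X.
Proof. exact: le_bigmax. Qed.

Lemma is_derive_along_line {R : realType} {f df : R -> R} (x h : R) :
  (forall t, is_derive t (1 : R) f (df t)) ->
  is_derive (0 : R) (1 : R) (fun t => f (x + t * h)) (df x * h).
Proof.
move=> fd; have lin : is_derive (0 : R) (1 : R) (fun t => x + t * h) h.
  by apply: is_derive_eq; rewrite add0r mul1r scaler0 add0r [_%:A]mulr1.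
have := @is_derive1_comp R f (fun t => x + t * h) 0 _ _ (fd _) lin.
by rewrite mul0r addr0.
Qed.

Section Score.
Context {R : realType} {n p r : nat}.
Variables (b b1 : R -> R) (y : 'M[R]_(n, p)) (om : 'I_n -> 'I_p -> bool)
  (A : 'M[R]_(p, r)) (i : 'I_n).
Hypothesis b_derive : forall t, is_derive t (1 : R) b (b1 t).

Let w j : R := (om i j)%:R.

Definition score th : 'rV[R]_r :=
  \sum_(j < p) (w j * (y i j - b1 (dotv (row j A) th))) *: row j A.

Definition loglik th : R :=
  \sum_(j < p) w j * (y i j * dotv (row j A) th - b (dotv (row j A) th)).

Lemma S1E phi th : S1 phi b1 y om i th A = phi^-1 *: score th.
Proof. by []. Qed.

Lemma is_derive_loglik th v :
  is_derive (0 : R) (1 : R) (fun t => loglik (th + t *: v)) (dotv (score th) v).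
Proof.
rewrite /loglik dotv_suml.
under eq_fun => t do under eq_bigr => j _ do rewrite dotvDr dotvZr.
rewrite -(fct_sumE _ _ (fun j t => w j * (y i j * (dotv (row j A) th + t * dotv (row j A) v)
                                           - b (dotv (row j A) th + t * dotv (row j A) v)))).
apply: is_derive_sum => j.
have := is_derive_along_line (dotv (row j A) th) (dotv (row j A) v) b_derive.
by move=> ?; apply: is_derive_eq; rewrite -![_ *: _]/(_ * _); ring.
Qed.

Lemma continuous_loglik : continuous loglik.
Proof.
apply: continuous_big => [|j _ x]; first exact: add_continuous.
apply: (continuousM (s := fun=> w j)
  (t := fun th => y i j * dotv (row j A) th - b (dotv (row j A) th))).
  exact: cst_continuous.
apply: (continuousB (f := fun th => y i j * dotv (row j A) th)
  (g := fun th => b (dotv (row j A) th))).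
  apply: (continuousM (s := fun=> y i j) (t := dotv (row j A))); first exact: cst_continuous.
  exact: continuous_dotv.
exact: continuous_comp (continuous_dotv (row j A) x) (continuous_of_is_derive b_derive _).
Qed.

Lemma score_le0_at_right_max th v :
  (exists2 t1, 0 < t1 & forall t, 0 < t <= t1 -> loglik (th + t *: v) <= loglik th) ->
  dotv (score th) v <= 0.
Proof.
move=> [t1 t1_gt0 t1_max]; apply: is_derive_le0_at_right_max (is_derive_loglik th v) t1_gt0 _.
by move=> t t_in; rewrite scale0r addr0; exact: t1_max.
Qed.

Lemma score_root_in_ball c rho : 0 < rho ->
  (forall d, dotv d d = rho ^+ 2 -> dotv (score (c + d)) d <= 0) ->
  exists2 th, score th = 0 & vnorm (th - c) <= rho.
Proof.
move=> rho_gt0 sphere_le0.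
pose K := [set th | dotv (th - c) (th - c) <= rho ^+ 2].
have K0 : K !=set0 by exists c; rewrite /K /= subrr dotv0r sqr_ge0.
have [th0 /[!inE] th0_in th0_max] := EVT_max_rV K0 (compact_dotv_ball c rho)
  (continuous_subspaceT continuous_loglik).
set d0 := th0 - c in th0_in.
exists th0; last exact: vnorm_le (ltW rho_gt0) th0_in.
apply: (kkt_ball_eq0 d0 _ rho) => // [v inward|d0_bd].
  apply: score_le0_at_right_max.
  have room : 0 <= rho ^+ 2 - dotv d0 d0 by rewrite subr_ge0.
  have : 0 < rho ^+ 2 - dotv d0 d0 \/ 2 * dotv d0 v < 0.
    by case: inward => ?; [left; rewrite subr_gt0 | right; lra].
  move=> /(small_quadratic_le _ _ _ (dotvv_ge0 v) room) [t1 t1_gt0 t1_small].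
  exists t1 => // t t_in; apply: th0_max; rewrite inE /K /=.
  rewrite (_ : _ - c = d0 + t *: v); last by rewrite /d0 addrAC.
  by rewrite dotvvDZ; have := t1_small t t_in; lra.
by have := sphere_le0 d0 d0_bd; rewrite /d0 addrC subrK.
Qed.

End Score.

Section NearTruth.
Context {R : realType} {n p r : nat}.
Variables (b b1 b2 b3 : R -> R) (Thetas : 'M[R]_(n, r)) (As A : 'M[R]_(p, r))
  (C1 C2 : R) (i : 'I_n) (y : 'M[R]_(n, p)) (om : 'I_n -> 'I_p -> bool).
Hypotheses (b_derive : forall t, is_derive t (1 : R) b (b1 t))
  (b1_derive : forall t, is_derive t (1 : R) b1 (b2 t))
  (b2_derive : forall t, is_derive t (1 : R) b2 (b3 t)) (b3_cont : continuous b3)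
  (b2_ge0 : forall t, 0 <= b2 t)
  (C1_gt0 : 0 < C1) (C2_gt0 : 0 < C2) (Thetas_le : norm2inf Thetas <= C1)
  (As_le : norm2inf As <= C2) (A_le : norm2inf A <= C2).

Let ts := row i Thetas.
Let w j : R := (om i j)%:R.
Let e j := dotv (row j A - row j As) ts.
Let mst j := Mstar Thetas As i j.
Let cc j := w j * b2 (mst j).
Let kap := kappa3 b3 (3 * C1 * C2).
Let sig := sigma_r (I1 b2 om Thetas As A i).
Let L := vnorm (ZOA b1 y om Thetas As A i) + vnorm (B1 b2 om Thetas As A i)
         + beta1 om Thetas As A i * kap.

Lemma MstarE j : mst j = dotv (row j As) ts.
Proof. by rewrite /mst /Mstar dotvE mxE; apply: eq_bigr => k _; rewrite !mxE mulrC. Qed.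

Lemma ZOAE : ZOA b1 y om Thetas As A i = \sum_(j < p) ((y i j - b1 (mst j)) * w j) *: row j A.
Proof.
rewrite /ZOA mulmx_sum_row; apply: eq_bigr => j _.
by rewrite mul_mx_diag /w /mst /Mstar !mxE.
Qed.

Lemma kappa3_ge0 : 0 <= kap.
Proof.
apply: le_trans (normr_ge0 (b3 0)) (kappa3_bound _ _ _ b3_cont _).
by rewrite normr0 !mulr_ge0 // ltW.
Qed.

Lemma b1_taylor_le x m h g :
  `|x| <= 3 * C1 * C2 -> `|m| <= 3 * C1 * C2 -> x - m = h + g ->
  `|b1 x - b1 m - b2 m * (h + g)| <= kap * (h ^+ 2 + g ^+ 2).
Proof.
move=> x_le m_le xm; rewrite -xm.
apply: le_trans (taylor_remainder_le kap _ m x b1_derive b2_derive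
  (fun t => kappa3_bound b3 _ t b3_cont) m_le x_le) _.
rewrite xm -mulrA ler_wpM2l ?kappa3_ge0 // ler_pdivrMl //.
by have := sqr_ge0 (h - g); rewrite !expr2; lra.
Qed.

Lemma score_linearization_le d v : vnorm d <= C1 ->
  dotv (score b1 y om A i (ts + d)) v <=
  (vnorm (ZOA b1 y om Thetas As A i) + vnorm (B1 b2 om Thetas As A i)) * vnorm v
  - \sum_(j < p) cc j * dotv (row j A) d * dotv (row j A) v
  + kap * \sum_(j < p) w j * (dotv (row j A) d ^+ 2 + e j ^+ 2) * `|dotv (row j A) v|.
Proof.
move=> d_le.
have row_dotv_le j (X : 'M[R]_(p, r)) u c : norm2inf X <= C2 -> vnorm u <= c ->
    `|dotv (row j X) u| <= C2 * c.
  move=> X_le u_le; apply: le_trans (normr_dotv_le _ _) _.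
  by apply: ler_pM; rewrite ?vnorm_ge0 //; exact: le_trans (vnorm_row_le _ _) X_le.
have ts_le : vnorm ts <= C1 by exact: le_trans (vnorm_row_le _ _) Thetas_le.
have C1C2_ge0 : 0 <= C1 * C2 by rewrite mulr_ge0 // ltW.
have term j : w j * (y i j - b1 (dotv (row j A) (ts + d))) * dotv (row j A) v <=
    (y i j - b1 (mst j)) * w j * dotv (row j A) v - cc j * e j * dotv (row j A) v
    - cc j * dotv (row j A) d * dotv (row j A) v
    + kap * (w j * (dotv (row j A) d ^+ 2 + e j ^+ 2) * `|dotv (row j A) v|).
  set h := dotv (row j A) d; set g := dotv (row j A) v.
  have x_le : `|dotv (row j A) (ts + d)| <= 3 * C1 * C2.
    rewrite dotvDr; apply: le_trans (ler_normD _ _) _.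
    have := row_dotv_le j _ _ _ A_le ts_le; have := row_dotv_le j _ _ _ A_le d_le; lra.
  have m_le : `|mst j| <= 3 * C1 * C2.
    by rewrite MstarE; have := row_dotv_le j _ _ _ As_le ts_le; lra.
  have xm : dotv (row j A) (ts + d) - mst j = h + e j.
    by rewrite dotvDr MstarE /e dotvBl -/h; ring.
  have rem_le := b1_taylor_le _ _ h (e j) x_le m_le xm.
  set rem := b1 _ - _ - _ in rem_le.
  have : - (rem * g) <= kap * (h ^+ 2 + e j ^+ 2) * `|g|.
    apply: le_trans (ler_norm _) _; rewrite normrN normrM.
    exact: ler_wpM2r (normr_ge0 g) _ _ rem_le.
  move=> /(ler_wpM2l (ler0n R (om i j))) w_rem_le.
  rewrite (_ : w j * _ * g = (y i j - b1 (mst j)) * w j * g - cc j * e j * g - cc j * h * g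
                              + w j * - (rem * g)); last by rewrite /rem /cc; ring.
  by rewrite lerD2l (_ : kap * _ = w j * (kap * (h ^+ 2 + e j ^+ 2) * `|g|)) //; ring.
rewrite /score dotv_suml; apply: le_trans (ler_sum _ (fun j _ => term j)) _.
rewrite !big_split /= !sumrN -mulr_sumr.
have zoa : dotv (ZOA b1 y om Thetas As A i) v
    = \sum_(j < p) (y i j - b1 (mst j)) * w j * dotv (row j A) v.
  by rewrite ZOAE dotv_suml.
have bb : dotv (B1 b2 om Thetas As A i) v = \sum_(j < p) cc j * e j * dotv (row j A) v.
  by rewrite /B1 dotv_suml.
rewrite -zoa -bb mulrDl.
have := ler_norm (dotv (ZOA b1 y om Thetas As A i) v).
have := normr_dotv_le (ZOA b1 y om Thetas As A i) v.
have := ler_norm (- dotv (B1 b2 om Thetas As A i) v).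
have := normr_dotv_le (B1 b2 om Thetas As A i) v; rewrite normrN.
lra.
Qed.

Lemma score_truth_le v : dotv (score b1 y om A i ts) v <= L * vnorm v.
Proof.
have := score_linearization_le 0 v; rewrite vnorm0 addr0 => /(_ (ltW C1_gt0)).
rewrite big1 => [|j _]; last by rewrite dotv0r mulr0 mul0r.
under eq_bigr => j _ do rewrite dotv0r expr0n add0r.
have [_ /(_ v)/(ler_wpM2l kappa3_ge0) beta_le] := beta1_bound om Thetas As A i.
rewrite /L !mulrDl; lra.
Qed.

Lemma score_sphere_le d : vnorm d <= C1 ->
  dotv (score b1 y om A i (ts + d)) d <=
  vnorm d * (L - sig * vnorm d + kap * gamma1 om A i * vnorm d ^+ 2).
Proof.
move=> d_le; apply: le_trans (score_linearization_le d d d_le) _.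
have gram := sigma_r_gram_le cc (fun j => row j A) (fun j => mulr_ge0 (ler0n _ _) (b2_ge0 _)) d.
rewrite -sqr_vnorm in gram.
have [_ /(_ d)/(ler_wpM2l kappa3_ge0) beta_le] := beta1_bound om Thetas As A i.
have [_ /(_ d)/(ler_wpM2l kappa3_ge0) gamma_le] := gamma1_bound om A i.
have -> : \sum_(j < p) cc j * dotv (row j A) d * dotv (row j A) d
          = \sum_(j < p) cc j * dotv (row j A) d ^+ 2.
  by apply: eq_bigr => j _; rewrite -mulrA -expr2.
have -> : \sum_(j < p) w j * (dotv (row j A) d ^+ 2 + e j ^+ 2) * `|dotv (row j A) d|
          = \sum_(j < p) w j * `|dotv (row j A) d| ^+ 3
            + \sum_(j < p) w j * e j ^+ 2 * `|dotv (row j A) d|.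
  rewrite -big_split; apply: eq_bigr => j _ /=.
  by rewrite -[dotv _ d ^+ 2]real_normK ?num_real //; ring.
rewrite mulrDr /L.
have -> : sig = sigma_r (\sum_(j < p) cc j *: ((row j A)^T *m row j A)) by [].
nra.
Qed.

Lemma score_root_near_truth : 0 < sig ->
  (gamma1 om A i * kap != 0 -> L <= sig ^+ 2 / (4 * gamma1 om A i * kap)) ->
  L <= 2^-1 * sig * C1 ->
  exists th, score b1 y om A i th = 0 /\
    vnorm (th - ts) <= 2 * sig^-1 * L /\ vnorm (th - ts) <= C1.
Proof.
move=> sig_gt0 gk_le L_le.
have [beta_ge0 _] := beta1_bound om Thetas As A i.
have [gamma_ge0 _] := gamma1_bound om A i.
have L_ge0 : 0 <= L by rewrite /L !addr_ge0 ?vnorm_ge0 ?mulr_ge0 ?kappa3_ge0.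
set rho := 2 * sig^-1 * L.
have rho_le : rho <= C1 by rewrite /rho mulrAC ler_pdivrMr //; lra.
have [L0|L_neq0] := eqVneq L 0.
  exists ts; rewrite subrr vnorm0 /rho L0 mulr0 lexx (ltW C1_gt0); split => //.
  by apply: dotvv_le0; have := score_truth_le (score b1 y om A i ts); rewrite L0 mul0r.
have rho_gt0 : 0 < rho by rewrite /rho !mulr_gt0 ?invr_gt0 // lt_def L_neq0.
have inward d : dotv d d = rho ^+ 2 -> dotv (score b1 y om A i (ts + d)) d <= 0.
  move=> dd; have vd : vnorm d = rho by rewrite vnormE dd sqrtr_sqr gtr0_norm.
  apply: le_trans (score_sphere_le d _) _; first by rewrite vd.
  rewrite vd; apply: mulr_ge0_le0 (ltW rho_gt0) _.
  exact: radius_condition_le0 sig_gt0 L_ge0 gamma_ge0 kappa3_ge0 gk_le.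
have [th root th_le] := score_root_in_ball b b1 y om A i b_derive ts rho rho_gt0 inward.
by exists th; split => //; split => //; exact: le_trans th_le rho_le.
Qed.

End NearTruth.

Theorem mainTheorem10 (R : realType) (n p r : nat) (phi : R)
  (b b1 b2 b3 : R -> R)
  (Thetas : 'M[R]_(n, r)) (As A : 'M[R]_(p, r)) (C1 C2 : R) (i : 'I_n)
  (y : 'M[R]_(n, p)) (om : 'I_n -> 'I_p -> bool) :
  0 < phi ->
  (forall x : R, is_derive x (1 : R) b (b1 x)) ->
  (forall x : R, is_derive x (1 : R) b1 (b2 x)) ->
  (forall x : R, is_derive x (1 : R) b2 (b3 x)) ->
  continuous b3 ->
  (forall x, 0 < b2 x) ->
  0 < C1 -> 0 < C2 ->
  norm2inf Thetas <= C1 ->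
  norm2inf As <= C2 ->
  norm2inf A <= C2 ->
  0 < sigma_r (I1 b2 om Thetas As A i) ->
  let sig := sigma_r (I1 b2 om Thetas As A i) in
  let k3 := kappa3 b3 (3 * C1 * C2) in
  let L := vnorm (ZOA b1 y om Thetas As A i) + vnorm (B1 b2 om Thetas As A i)
           + beta1 om Thetas As A i * k3 in
  (gamma1 om A i * k3 != 0 -> L <= sig ^+ 2 / (4 * gamma1 om A i * k3)) ->
  L <= 2^-1 * sig * C1 ->
  exists theta : 'rV[R]_r,
    S1 phi b1 y om i theta A = 0 /\
    vnorm (theta - row i Thetas) <= 2 * sig^-1 * L /\
    vnorm (theta - row i Thetas) <= C1.
Proof.
(* phi only rescales the score *)
move=> _ b_derive b1_derive b2_derive b3_cont b2_gt0 C1_gt0 C2_gt0 Thetas_le As_le A_le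
  sig_gt0 sig k3 L gk_le L_le.
have [th [root th_le]] := score_root_near_truth b b1 b2 b3 Thetas As A C1 C2 i y om
  b_derive b1_derive b2_derive b3_cont (fun t => ltW (b2_gt0 t)) C1_gt0 C2_gt0
  Thetas_le As_le A_le sig_gt0 gk_le L_le.
by exists th; rewrite S1E root scaler0.
Qed.
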